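(* Let $L\ge 6$ be even, let $\eta\in V_{\mathrm{o}}$ and let $\ell_1,\ell_2$ be integers with $0\le \ell_1,\ell_2\le L$. Then: (i) If $\max\{\ell_1,\ell_2\}\le L-2$ and $\min\{\ell_1,\ell_2\}\ge L/2$, then the complement $V\setminus\mathcal{R}_{\ell_1,\ell_2}(\eta)$ is a rhombus $\mathcal{R}_{L-\ell_1-1,L-\ell_2-1}(\hat\eta)$ for some $\hat\eta\in V_{\mathrm{e}}$. (ii) If $\max\{\ell_1,\ell_2\}=L-1$ and $\min\{\ell_1,\ell_2\}\ge L/2$, then $V\setminus\mathcal{R}_{\ell_1,\ell_2}(\eta)$ is the disjoint union of $L-\min\{\ell_1,\ell_2\}$ odd sites. (iii) If $\max\{\ell_1,\ell_2\}=L$ and $\min\{\ell_1,\ell_2\}<L/2$, then $\mathcal{R}_{\ell_1,\ell_2}(\eta)$ contains exactly $L\min\{\ell_1,\ell_2\}$ odd sites and $L(\min\{\ell_1,\ell_2\}+1)$ even sites. (iv) If $\max\{\ell_1,\ell_2\}=L$ and $\min\{\ell_1,\ell_2\}\ge L/2$, then $\mathcal{R}_{\ell_1,\ell_2}(\eta)=V$.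
   Context: $L\ge 6$ is an even integer and $\Lambda=(V,E)$ is the $L\times L$ toric grid graph: $V=\{0,\dots,L-1\}^2$, two sites are adjacent iff they differ by $\pm1$ modulo $L$ in exactly one coordinate; all coordinate arithmetic is modulo $L$. A site is even (odd) if the sum of its coordinates is even (odd); $V_{\mathrm{e}}$, $V_{\mathrm{o}}$ denote the sets of even and odd sites. For $S\subseteq V$, $\partial^+S$ is the set of sites not in $S$ adjacent to some site of $S$. For a reference site $\eta=(\eta_1,\eta_2)$ and positive integers $\ell_1,\ell_2\le L$, set $S_{\ell_1,\ell_2}(\eta)=\{(\eta_1+k+j,\ \eta_2+k-j): 0\le k\le \ell_1-1,\ 0\le j\le \ell_2-1\}$ and define the rhombus $\mathcal{R}_{\ell_1,\ell_2}(\eta)=S_{\ell_1,\ell_2}(\eta)\cup\partial^+S_{\ell_1,\ell_2}(\eta)$. When $\eta\in V_{\mathrm{o}}$, $S_{\ell_1,\ell_2}(\eta)$ consists of odd sites and its boundary of even sites; when $\eta\in V_{\mathrm{e}}$ (as in (i)) the same formula defines a rhombus whose set $S$ consists of even sites and whose boundary consists of odd sites. *)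

From mathcomp Require Import all_boot.
Set Implicit Arguments. Unset Strict Implicit. Unset Printing Implicit Defensive.

Definition site (L : nat) := ('I_L * 'I_L)%type.

Definition even_site L (x : site L) : bool := ~~ odd (x.1 + x.2).
Definition odd_site L (x : site L) : bool := odd (x.1 + x.2).

Definition nbr1 (L : nat) (a b : nat) : bool :=
  (b == (a + 1) %% L) || (a == (b + 1) %% L).

Definition adj L (x y : site L) : bool :=
  ((x.1 == y.1) && nbr1 L x.2 y.2) || ((x.2 == y.2) && nbr1 L x.1 y.1).

(* S_{l1,l2}(eta) = {(eta1+k+j, eta2+k-j) mod L : 0<=k<l1, 0<=j<l2} *)
Definition Sset L (l1 l2 : nat) (eta : site L) : {set site L} :=
  [set x : site L | [exists k : 'I_l1, exists j : 'I_l2,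
     (x.1 == (eta.1 + k + j) %% L :> nat) &&
     (x.2 == (eta.2 + k + (L - j %% L)) %% L :> nat)]].

Definition outer_bd L (S : {set site L}) : {set site L} :=
  [set x : site L | (x \notin S) && [exists y in S, adj x y]].

Definition rhombus L (l1 l2 : nat) (eta : site L) : {set site L} :=
  Sset l1 l2 eta :|: outer_bd (Sset l1 l2 eta).

From mathcomp Require Import all_boot all_algebra zify ring.
Import GRing.Theory.

Set Implicit Arguments.
Unset Strict Implicit.
Unset Printing Implicit Defensive.

(* Write the sites of the parity of e as diag e (k, j) = e + k (1, 1) + j (1, -1)
   with k, j in Z/L; since L is even, the parameters of a site are exactly (k, j)
   and its twin (k + L/2, j + L/2).  In these coordinates S_{l1,l2}(e) is the image
   of the box [0, l1) x [0, l2), and its outer boundary is the image of the box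
   [0, l1] x [0, l2] in the coordinates based at the west neighbour of e, which
   carries the other parity.  When l1, l2 >= L/2, a box of sides l1, l2 together
   with its twin leaves uncovered exactly a translate of a box of sides L - l1,
   L - l2 together with its twin; the four statements then reduce to counting
   parameters in Z/L. *)

Lemma card_ord_ltn N m : #|[set k : 'I_N | k < m]| = minn m N.
Proof.
have -> : [set k : 'I_N | k < m] = widen_ord (geq_minr m N) @: 'I_(minn m N).
  apply/setP => k; rewrite inE; apply/idP/imsetP => [lt_k_m | [i _ ->]].
    have lt_k_min : k < minn m N by rewrite leq_min lt_k_m ltn_ord.
    by exists (Ordinal lt_k_min); last apply: val_inj.
  exact: leq_trans (ltn_ord i) (geq_minl m N).
by rewrite card_imset ?card_ord // => i j [] /val_inj.
Qed.

Lemma card_ord_geq N m : #|[set k : 'I_N | m <= k]| = N - m.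
Proof.
have -> : [set k : 'I_N | m <= k] = ~: [set k : 'I_N | k < m].
  by apply/setP => k; rewrite !inE leqNgt.
by rewrite cardsCs setCK card_ord card_ord_ltn; lia.
Qed.

Section EvenTorus.

Variable n : nat.
Hypothesis n_even : ~~ odd n.
Local Notation L := n.+2.
Local Notation Z := 'I_n.+2.
Local Notation h := L./2.
Implicit Types (e x : site L) (p q c : Z * Z) (A B : {set Z * Z}).

Lemma val_ZpD (x y : Z) : nat_of_ord (x + y)%R = if x + y < L then x + y else x + y - L.
Proof.
rewrite /= /inZp /=; case: ltnP => [/modn_small -> //|le_L_xy].
have -> : x + y = x + y - L + L by rewrite subnK.
by rewrite modnDr modn_small //; have := ltn_ord x; have := ltn_ord y; lia.
Qed.

Lemma val_ZpN (x : Z) : nat_of_ord (- x)%R = if x == 0 :> nat then 0 else L - x.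
Proof.
rewrite /= /inZp /=; case: eqP => [->|/eqP x_gt0]; first by rewrite subn0 modnn.
by rewrite modn_small //; lia.
Qed.

Lemma val_Zp1 : nat_of_ord (1 : Z)%R = 1.
Proof. by []. Qed.

Lemma val_natr (c : nat) : c < L -> nat_of_ord (c%:R : Z)%R = c.
Proof. by move=> lt_c_L; rewrite Zp_nat /= modn_small. Qed.

Lemma odd_ZpD (x y : Z) : odd (x + y)%R = odd x (+) odd y.
Proof.
rewrite val_ZpD; case: ltnP => [_|le_L_xy]; first by rewrite oddD.
by rewrite oddB // oddD [odd L]/= (negbTE n_even) addbF.
Qed.

Lemma odd_ZpN (x : Z) : odd (- x)%R = odd x.
Proof.
rewrite val_ZpN; case: eqP => [->|_] //.
by rewrite oddB ?(ltnW (ltn_ord x)) // [odd L]/= (negbTE n_even).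
Qed.

Lemma half_addnn : h + h = L.
Proof. by rewrite addnn -[RHS]odd_double_half [odd L]/= (negbTE n_even). Qed.

Definition half : Z := (h%:R)%R.

Lemma val_half : nat_of_ord half = h.
Proof. by rewrite val_natr //; have := half_addnn; lia. Qed.

Lemma val_addr_half (k : Z) : nat_of_ord (k + half)%R = if k < h then k + h else k - h.
Proof.
have := ltn_ord k; have := half_addnn; rewrite val_ZpD val_half.
by case: (ltnP (k + h) L); case: (ltnP k h); lia.
Qed.

Lemma addr_half : (half + half = 0)%R.
Proof. by apply: ord_inj; rewrite val_ZpD val_half half_addnn ltnn subnn. Qed.

Lemma oppr_half : (- half = half)%R.
Proof. by apply/eqP; rewrite eq_sym -addr_eq0 addr_half. Qed.

Lemma addr_double_eq0 (d : Z) : (d + d = 0)%R -> d = 0%R \/ d = half.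
Proof.
move/(congr1 (@nat_of_ord _)); rewrite val_ZpD /=; have := ltn_ord d; have := half_addnn.
by case: (ltnP (d + d) L); [left | right]; apply: ord_inj; rewrite ?val_half /=; lia.
Qed.

Lemma ltn_or_addr_half (k : Z) m : h <= m -> (k < m) || ((k + half)%R < m).
Proof. by rewrite val_addr_half; have := ltn_ord k; have := half_addnn; case: ifP; lia. Qed.

Lemma ltn_addr_halfN (k : Z) m : m <= h -> k < m -> ~~ ((k + half)%R < m).
Proof. by rewrite val_addr_half; case: ifP; lia. Qed.

Lemma leq_ZpB (z : Z) m : m <= L -> (m <= z) = ((z - m%:R)%R < L - m).
Proof.
rewrite leq_eqVlt => /predU1P [->|lt_m_L].
  have -> : (L%:R : Z)%R = 0%R by apply: ord_inj; rewrite Zp_nat /= modnn.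
  by rewrite subr0 subnn ltn0 leqNgt ltn_ord.
have := ltn_ord z; rewrite val_ZpD val_ZpN val_natr //.
by case: eqP => ?; case: ifP; lia.
Qed.

Definition lower (a b : Z) := (b == a) || (b == a + 1)%R.

Lemma lower_ltn (a b : Z) m : m <= L -> lower a b -> a < m -> b < m.+1.
Proof.
move=> le_m_L /orP [] /eqP ->; first by move/ltnW.
by rewrite val_ZpD val_Zp1; case: ifP; lia.
Qed.

Lemma ltn_lower (b : Z) m : 0 < m <= L -> b < m.+1 -> exists2 a, lower a b & a < m.
Proof.
move=> /andP [m_gt0 le_m_L]; rewrite ltnS leq_eqVlt => /predU1P [b_m|lt_b_m].
  exists (b - 1)%R; first by rewrite /lower subrK eqxx orbT.
  by rewrite val_ZpD val_ZpN val_Zp1 /=; case: ifP; lia.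
by exists b; rewrite /lower ?eqxx.
Qed.

Local Open Scope ring_scope.

Definition diag e p : site L := (e.1 + p.1 + p.2, e.2 + p.1 - p.2).
Definition west e : site L := (e.1 - 1, e.2).
Definition twin p : Z * Z := (p.1 + half, p.2 + half).

Lemma twinE k j : twin (k, j) = (k + half, j + half).
Proof. by []. Qed.

Lemma odd_siteE x : odd_site x = odd x.1 (+) odd x.2.
Proof. by rewrite /odd_site oddD. Qed.

Lemma odd_site_diag e p : odd_site (diag e p) = odd_site e.
Proof.
rewrite !odd_siteE !odd_ZpD odd_ZpN.
by case: (odd e.1); case: (odd e.2); case: (odd p.1); case: (odd p.2).
Qed.

Lemma odd_site_west e : odd_site (west e) = ~~ odd_site e.
Proof. by rewrite !odd_siteE odd_ZpD odd_ZpN; case: (odd e.1); case: (odd e.2). Qed.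

Lemma diag_twin e p : diag e (twin p) = diag e p.
Proof.
congr pair; rewrite /=; last by ring.
by rewrite -[RHS]addr0 -addr_half; ring.
Qed.

Lemma diag_inj e p q : diag e p = diag e q -> q = p \/ q = twin p.
Proof.
case: p q => [k j] [k' j'] E.
have /= E1 := congr1 fst E; have /= E2 := congr1 snd E.
have dbl : (k' - k) + (k' - k) = 0.
  have -> : (k' - k) + (k' - k) =
            (e.1 + k' + j' + (e.2 + k' - j')) - (e.1 + k + j + (e.2 + k - j)) by ring.
  by rewrite -E1 -E2 subrr.
have -> : j' = j - (k' - k) by apply: (addrI (e.1 + k')); rewrite -E1; ring.
have -> : k' = (k' - k) + k by ring.
case/addr_double_eq0: dbl => ->; [left | right];
  by congr pair; rewrite /= ?addrK ?oppr_half; ring.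
Qed.

Lemma diag_surj e x : odd_site x = odd_site e -> exists p, x = diag e p.
Proof.
move=> par_x; set a := x.1 - e.1; set b := x.2 - e.2.
have even_ab : ~~ odd (a + b)%N.
  move: par_x; rewrite oddD !odd_siteE !odd_ZpD !odd_ZpN.
  by case: (odd x.1); case: (odd x.2); case: (odd e.1); case: (odd e.2).
set k : Z := ((a + b)%N./2)%:R.
have kk : k + k = a + b.
  rewrite -natrD addnn -[X in _ = X + _]natr_Zp -[X in _ = _ + X]natr_Zp -natrD.
  by rewrite -[in RHS](odd_double_half (a + b)) (negbTE even_ab) add0n.
exists (k, a - k); apply: injective_projections; rewrite /=.
  by rewrite /a; ring.
have -> : e.2 + k - (a - k) = e.2 + (k + k) - a by ring.
by rewrite kk /a /b; ring.
Qed.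

Lemma diag_or_west e x : (exists p, x = diag e p) \/ (exists p, x = diag (west e) p).
Proof.
have [/eqP par_x | par_x] := boolP (odd_site x == odd_site e); [left | right].
  exact: diag_surj.
by apply: diag_surj; move: par_x; rewrite odd_site_west; do 2!case: odd_site.
Qed.

Definition sites e A : {set site L} := diag e @: A.

Lemma mem_sites e A p : (diag e p \in sites e A) = (p \in A) || (twin p \in A).
Proof.
apply/imsetP/orP => [[q q_A /diag_inj [] q_eq]|[p_A|tp_A]].
- by left; rewrite -q_eq.
- by right; rewrite -q_eq.
- by exists p.
- by exists (twin p); rewrite ?diag_twin.
Qed.

Lemma odd_site_sites e A x : x \in sites e A -> odd_site x = odd_site e.
Proof. by case/imsetP => p _ ->; rewrite odd_site_diag. Qed.

Lemma diag_notin_sites e e' A p :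
  odd_site e' != odd_site e -> (diag e p \in sites e' A) = false.
Proof. by apply: contraNF => /odd_site_sites <-; rewrite odd_site_diag. Qed.

Lemma diag_notin_sites_west e A p : (diag e p \in sites (west e) A) = false.
Proof. by rewrite diag_notin_sites // odd_site_west; case: odd_site. Qed.

Lemma west_notin_sites e A p : (diag (west e) p \in sites e A) = false.
Proof. by rewrite diag_notin_sites // odd_site_west; case: odd_site. Qed.

Lemma card_sites e A : {in A, forall p, twin p \notin A} -> #|sites e A| = #|A|.
Proof.
move=> twin_out; apply: card_in_imset => p q p_A q_A /diag_inj [] // q_twin.
by move: q_A; rewrite q_twin (negbTE (twin_out p p_A)).
Qed.

Lemma sites_diag e c A : sites (diag e c) A = sites e [set p : Z * Z | p - c \in A].
Proof.
apply/setP => x; apply/imsetP/imsetP => [[p p_A ->]|[p]].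
  by exists (p + c); rewrite ?inE ?addrK //; congr pair; rewrite /=; ring.
by rewrite inE => p_A ->; exists (p - c) => //; congr pair; rewrite /=; ring.
Qed.

Lemma adjE x y : adj x y =
  ((x.1 == y.1) && ((y.2 == x.2 + 1) || (x.2 == y.2 + 1))) ||
  ((x.2 == y.2) && ((y.1 == x.1 + 1) || (x.1 == y.1 + 1))).
Proof. by rewrite /adj /nbr1 -!val_eqE. Qed.

Lemma adj_diag_lower e p x :
  adj x (diag e p) -> exists2 q, x = diag (west e) q & lower p.1 q.1 && lower p.2 q.2.
Proof.
case: x => x1 x2; rewrite adjE /= => /orP [] /andP [/eqP -> /orP []] /eqP E.
- have -> : x2 = e.2 + p.1 - p.2 - 1 by rewrite E addrK.
  by exists (p.1, p.2 + 1); [congr pair; rewrite /=; ring | rewrite /lower !eqxx orbT].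
- by exists (p.1 + 1, p.2); [congr pair; rewrite /= ?E; ring | rewrite /lower !eqxx orbT].
- have -> : x1 = e.1 + p.1 + p.2 - 1 by rewrite E addrK.
  by exists p; [congr pair; rewrite /=; ring | rewrite /lower !eqxx].
- by exists (p.1 + 1, p.2 + 1); [congr pair; rewrite /= ?E; ring | rewrite /lower !eqxx !orbT].
Qed.

Lemma adj_lower_diag e p q :
  lower p.1 q.1 -> lower p.2 q.2 -> adj (diag (west e) q) (diag e p).
Proof.
case: q => q1 q2; rewrite /lower /= => /orP [] /eqP -> /orP [] /eqP ->; rewrite adjE /=.
- by apply/orP; right; apply/andP; split; [|apply/orP; left]; apply/eqP; ring.
- by apply/orP; left; apply/andP; split; [|apply/orP; left]; apply/eqP; ring.
- by apply/orP; left; apply/andP; split; [|apply/orP; right]; apply/eqP; ring.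
- by apply/orP; right; apply/andP; split; [|apply/orP; right]; apply/eqP; ring.
Qed.

Local Close Scope ring_scope.

Definition box m1 m2 : {set Z * Z} := setX [set k : Z | k < m1] [set j : Z | j < m2].

(* For h <= m1, m2, cobox m1 m2 and its twin cover the parameters that neither
   box m1 m2 nor its twin covers (box_twinC); it is a translate of the box of
   sides L - m1, L - m2 (cobox_shift). *)
Definition cobox m1 m2 : {set Z * Z} :=
  setX [set k : Z | m1 <= (k + half)%R] [set j : Z | m2 <= j].

Lemma Sset_sites e l1 l2 : l1 <= L -> l2 <= L -> Sset l1 l2 e = sites e (box l1 l2).
Proof.
move=> le_l1_L le_l2_L; apply/setP => x; rewrite inE; apply/existsP/imsetP.
  case=> k /existsP [j /andP [/eqP x1E /eqP x2E]].
  exists (widen_ord le_l1_L k, widen_ord le_l2_L j); first by rewrite !inE /= !ltn_ord.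
  case: x x1E x2E => x1 x2 /= x1E x2E; congr pair; apply: val_inj => /=.
    by rewrite x1E modnDml.
  by rewrite x2E modnDml modnDmr (modn_small (leq_trans (ltn_ord j) le_l2_L)).
case=> [[k j]]; rewrite !inE /= => /andP [lt_k_l1 lt_j_l2] ->.
exists (Ordinal lt_k_l1); apply/existsP; exists (Ordinal lt_j_l2).
by rewrite /= !modnDml modnDmr (modn_small (ltn_ord j)) !eqxx.
Qed.

Lemma outer_bd_sites e l1 l2 : 0 < l1 <= L -> 0 < l2 <= L ->
  outer_bd (sites e (box l1 l2)) = sites (west e) (box l1.+1 l2.+1).
Proof.
move=> l1_bd l2_bd; have /andP [_ le_l1_L] := l1_bd; have /andP [_ le_l2_L] := l2_bd.
apply/setP => x; rewrite inE; apply/andP/imsetP.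
  case=> _ /existsP [_ /andP [/imsetP [p] + -> /adj_diag_lower [q -> /andP [low1 low2]]]].
  rewrite !inE => /andP [lt1 lt2]; exists q => //.
  by rewrite !inE (lower_ltn le_l1_L low1) ?(lower_ltn le_l2_L low2).
case=> q; rewrite !inE => /andP [lt1 lt2] ->; split; first by rewrite west_notin_sites.
have [a1 low1 lt_a1] := ltn_lower l1_bd lt1; have [a2 low2 lt_a2] := ltn_lower l2_bd lt2.
apply/existsP; exists (diag e (a1, a2)); rewrite adj_lower_diag // andbT.
by apply: imset_f; rewrite !inE lt_a1.
Qed.

Lemma rhombusE e l1 l2 : 0 < l1 <= L -> 0 < l2 <= L ->
  rhombus l1 l2 e = sites e (box l1 l2) :|: sites (west e) (box l1.+1 l2.+1).
Proof.
move=> l1_bd l2_bd; have /andP [_ le_l1_L] := l1_bd; have /andP [_ le_l2_L] := l2_bd.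
by rewrite /rhombus Sset_sites // outer_bd_sites.
Qed.

Lemma box_twinC m1 m2 p : h <= m1 -> h <= m2 ->
  ~~ ((p \in box m1 m2) || (twin p \in box m1 m2)) =
  (p \in cobox m1 m2) || (twin p \in cobox m1 m2).
Proof.
case: p => k j h_m1 h_m2; rewrite twinE !in_setX !inE -addrA addr_half addr0.
rewrite !(leqNgt m1) !(leqNgt m2).
move: (ltn_or_addr_half k h_m1) (ltn_or_addr_half j h_m2).
by case: (k < m1); case: (j < m2); case: ((k + half)%R < m1); case: ((j + half)%R < m2).
Qed.

Lemma setC_rhombus e l1 l2 : h <= l1 <= L -> h <= l2 <= L ->
  ~: rhombus l1 l2 e = sites e (cobox l1 l2) :|: sites (west e) (cobox l1.+1 l2.+1).
Proof.
move=> /andP [h_l1 le_l1_L] /andP [h_l2 le_l2_L].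
have h_gt0 : 0 < h by have := half_addnn; lia.
rewrite rhombusE ?(leq_trans h_gt0) //; apply/setP => x; rewrite in_setC !in_setU.
case: (diag_or_west e x) => -[p ->].
  by rewrite !mem_sites !diag_notin_sites_west !orbF box_twinC.
by rewrite !west_notin_sites !mem_sites box_twinC // leqW.
Qed.

Lemma cobox_eq0 m1 m2 : L <= maxn m1 m2 -> cobox m1 m2 = set0.
Proof.
move=> le_L_max; apply/setP => -[k j]; rewrite in_setX !inE.
by have := ltn_ord (k + half)%R; have := ltn_ord j; lia.
Qed.

Lemma cobox_twin m1 m2 p : h <= m2 -> p \in cobox m1 m2 -> twin p \notin cobox m1 m2.
Proof.
case: p => k j h_m2; rewrite twinE !in_setX !inE => /andP [_ le_m2_j].
rewrite negb_and -[~~ (m2 <= _)]ltnNge orbC.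
by move: (ltn_or_addr_half j h_m2); rewrite ltnNge le_m2_j => /= ->.
Qed.

Lemma box_twin m1 m2 p : minn m1 m2 <= h -> p \in box m1 m2 -> twin p \notin box m1 m2.
Proof.
case: p => k j; rewrite twinE !in_setX !inE negb_and => min_le /andP [lt_k lt_j].
case: (leqP m1 m2) => [le12 | /ltnW le21].
  by move: min_le; rewrite (minn_idPl le12) => /ltn_addr_halfN ->.
by move: min_le; rewrite (minn_idPr le21) => /ltn_addr_halfN ->; rewrite ?orbT.
Qed.

Lemma card_box m1 m2 : #|box m1 m2| = minn m1 L * minn m2 L.
Proof. by rewrite /box cardsX !card_ord_ltn. Qed.

Lemma card_cobox m1 m2 : #|cobox m1 m2| = (L - m1) * (L - m2).
Proof.
rewrite /cobox cardsX card_ord_geq.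
have -> : [set k : Z | m1 <= (k + half)%R] = (+%R^~ half) @^-1: [set k : Z | m1 <= k].
  by apply/setP => k; rewrite !inE.
by rewrite card_preimset ?card_ord_geq //; apply: addIr.
Qed.

Lemma cobox_shift m1 m2 : m1 <= L -> m2 <= L ->
  [set p : Z * Z | (p - (m1%:R + half, m2%:R))%R \in box (L - m1) (L - m2)] = cobox m1 m2.
Proof.
move=> le_m1_L le_m2_L; apply/setP => p; rewrite !inE (leq_ZpB (p.1 + half)%R) // (leq_ZpB p.2) //.
have -> : (p.1 + half - m1%:R = (p - (m1%:R + half, m2%:R)).1)%R.
  by rewrite /= opprD oppr_half addrA addrAC.
by [].
Qed.

Lemma setC_rhombus_rhombus e l1 l2 : h <= l1 <= L - 2 -> h <= l2 <= L - 2 ->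
  ~: rhombus l1 l2 e =
  rhombus (L - l1 - 1) (L - l2 - 1) (diag (west e) (l1.+1%:R + half, l2.+1%:R)%R).
Proof.
move=> l1_bd l2_bd; set etah := diag (west e) _.
have west_etah : west etah = diag e (l1%:R + half, l2%:R)%R.
  by congr pair; rewrite /= -!natr1; ring.
have [-> ->] : L - l1 - 1 = L - l1.+1 /\ L - l2 - 1 = L - l2.+1 by lia.
rewrite setC_rhombus ?rhombusE; try lia.
have [-> ->] : (L - l1.+1).+1 = L - l1 /\ (L - l2.+1).+1 = L - l2 by lia.
by rewrite west_etah !sites_diag !cobox_shift; [apply: setUC | lia..].
Qed.

Lemma setC_rhombus_odd e l1 l2 :
  odd_site e -> maxn l1 l2 = L - 1 -> h <= minn l1 l2 ->
  {subset ~: rhombus l1 l2 e <= [pred x | odd_site x]} /\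
  #|~: rhombus l1 l2 e| = L - minn l1 l2.
Proof.
move=> odd_e max_l min_l.
have -> : ~: rhombus l1 l2 e = sites e (cobox l1 l2).
  by rewrite setC_rhombus ?[cobox l1.+1 _]cobox_eq0 /sites ?imset0 ?setU0 //; lia.
split; first by move=> x /odd_site_sites; rewrite inE odd_e.
rewrite card_sites ?card_cobox; first nia.
by move=> p; apply: cobox_twin; lia.
Qed.

Lemma sites_parity_split e A B : odd_site e ->
  [set x in sites e A :|: sites (west e) B | odd_site x] = sites e A /\
  [set x in sites e A :|: sites (west e) B | even_site x] = sites (west e) B.
Proof.
move=> odd_e.
have odd_A x : x \in sites e A -> odd_site x by move/odd_site_sites ->.
have even_B x : x \in sites (west e) B -> ~~ odd_site x.
  by move/odd_site_sites ->; rewrite odd_site_west odd_e.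
split; apply/setP => x; rewrite !inE /even_site -/(odd_site x).
  case: (boolP (x \in sites e A)) => [/odd_A -> // | _] /=.
  by case: (boolP (x \in sites (west e) B)) => [/even_B /negbTE -> | _].
case: (boolP (x \in sites (west e) B)) => [/even_B -> | _]; first by rewrite orbT.
by case: (boolP (x \in sites e A)) => [/odd_A -> | _].
Qed.

Lemma card_rhombus_parity e l1 l2 : odd_site e -> 0 < l1 -> 0 < l2 ->
  maxn l1 l2 = L -> minn l1 l2 < h ->
  #|[set x in rhombus l1 l2 e | odd_site x]| = L * minn l1 l2 /\
  #|[set x in rhombus l1 l2 e | even_site x]| = L * (minn l1 l2).+1.
Proof.
move=> odd_e l1_gt0 l2_gt0 max_l min_l; rewrite rhombusE; try lia.
have [-> ->] := sites_parity_split (box l1 l2) (box l1.+1 l2.+1) odd_e.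
by rewrite !card_sites ?card_box; [split; nia | move=> p; apply: box_twin; lia..].
Qed.

Lemma rhombus_full e l1 l2 : maxn l1 l2 = L -> h <= minn l1 l2 -> rhombus l1 l2 e = setT.
Proof.
move=> max_l min_l; rewrite -[rhombus _ _ _]setCK setC_rhombus; try lia.
by rewrite !cobox_eq0 /sites ?imset0 ?setU0 ?setC0 //; lia.
Qed.

End EvenTorus.

Theorem lemma3p2 (L : nat) (hL : 6 <= L) (hLe : ~~ odd L)
  (eta : site L) (heta : odd_site eta) (l1 l2 : nat)
  (hl1 : 0 < l1 <= L) (hl2 : 0 < l2 <= L) :
  [/\ (maxn l1 l2 <= L - 2 -> L./2 <= minn l1 l2 ->
        exists2 etah : site L, even_site etah &
          ~: rhombus l1 l2 eta = rhombus (L - l1 - 1) (L - l2 - 1) etah),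
      (maxn l1 l2 = L - 1 -> L./2 <= minn l1 l2 ->
        {subset ~: rhombus l1 l2 eta <= [pred x | odd_site x]} /\
        #|~: rhombus l1 l2 eta| = L - minn l1 l2),
      (maxn l1 l2 = L -> minn l1 l2 < L./2 ->
        #|[set x in rhombus l1 l2 eta | odd_site x]| = L * minn l1 l2 /\
        #|[set x in rhombus l1 l2 eta | even_site x]| = L * (minn l1 l2).+1)
    & (maxn l1 l2 = L -> L./2 <= minn l1 l2 -> rhombus l1 l2 eta = setT)].
Proof.
have [n L_eq] : exists n, L = n.+2 by exists L.-2; lia.
subst L; have n_even : ~~ odd n by move: hLe; rewrite /= negbK.
split=> max_l min_l.
- exists (diag (west eta) (l1.+1%:R + half n, l2.+1%:R))%R.
    by rewrite /even_site -/(odd_site _) (odd_site_diag n_even) (odd_site_west n_even) heta.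
  by apply: setC_rhombus_rhombus; lia.
- exact: setC_rhombus_odd.
- by apply: card_rhombus_parity; lia.
- exact: rhombus_full.
Qed.
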